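(* Let $N\ge1$ and let $\mathfrak{g}^{(N)}$ be the Lie–Poisson algebra with coordinate functions $y_i^\alpha$ ($\alpha=1,2,3$, $i=0,\dots,N-1$) and brackets $$\{y_i^\alpha,y_j^\beta\}=\begin{cases}\epsilon^{\alpha\beta}_{\ \ \gamma}\,y^\gamma_{i+j}, & i+j<N,\\ 0,& i+j\ge N,\end{cases}$$ extended to polynomial functions by bilinearity and the Leibniz rule. Fix $\mathbf{b}=(b^1,b^2,b^3)^T\in\mathbb{R}^3$ (a constant), write $\mathbf{y}_i=(y_i^1,y_i^2,y_i^3)^T$ and let $\langle\cdot,\cdot\rangle$ be the Euclidean scalar product. For $k=1,\dots,N$ define $$H_k=2\langle\mathbf{b},\mathbf{y}_{k-1}\rangle+\sum_{i=0}^{k-2}\langle\mathbf{y}_i,\mathbf{y}_{k-i-2}\rangle,\qquad C_k=\sum_{i=k-1}^{N-1}\langle\mathbf{y}_i,\mathbf{y}_{N+k-i-2}\rangle.$$ Then, with $\mathcal{L}(\lambda)=\sum_{\alpha=1}^3\sigma^\alpha\big[b^\alpha+\sum_{i=0}^{N-1}y_i^\alpha\lambda^{-i-1}\big]$, one has $4\det(\mathcal{L}(\lambda)-\mu\mathbb 1)=4\mu^2+\langle\mathbf{b},\mathbf{b}\rangle+\sum_{k=1}^N H_k\lambda^{-k}+\sum_{k=1}^N C_k\lambda^{-N-k}$, and $$\{H_i,H_k\}=\{C_i,H_k\}=\{C_i,C_k\}=0\qquad (i,k=1,\dots,N).$$ Moreover each $C_k$ is a Casimir function of $\mathfrak{g}^{(N)}$: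 $\{C_k,y_j^\beta\}=0$ for all $\beta=1,2,3$, $j=0,\dots,N-1$, $k=1,\dots,N$.
   Context: $\epsilon^{\alpha\beta}_{\ \ \gamma}$ is the totally skew-symmetric tensor with $\epsilon^{12}_{\ \ 3}=1$, and repeated index $\gamma$ is summed over $1,2,3$. The matrices are $\sigma^1=\tfrac12\begin{pmatrix}0&\mathrm{i}\\ \mathrm{i}&0\end{pmatrix}$, $\sigma^2=\tfrac12\begin{pmatrix}0&1\\-1&0\end{pmatrix}$, $\sigma^3=\tfrac12\begin{pmatrix}\mathrm{i}&0\\0&-\mathrm{i}\end{pmatrix}$, and $\mathbb 1$ is the $2\times 2$ identity. Empty sums are zero. *)

From HB Require Import structures.
From mathcomp Require Import all_boot all_order all_algebra.
From mathcomp Require Import mpoly.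
From mathcomp Require Import complex.
Set Implicit Arguments. Unset Strict Implicit. Unset Printing Implicit Defensive.
Import Order.TTheory GRing.Theory Num.Theory.
Local Open Scope ring_scope.

Section LiePoisson.
Variable R : rcfType.
Variable N : nat.

(* the 3N coordinate functions y_i^alpha, i : 'I_N, alpha : 'I_3 (0-based:
   alpha = 0,1,2 stands for 1,2,3) are the variables of {mpoly R[N*3]} *)
Definition yidx (i : 'I_N) (a : 'I_3) : 'I_(N * 3) := mxvec_index i a.

(* y_k^a for a natural index k; it is 0 (never used) when k >= N *)
Definition yv (k : nat) (a : 'I_3) : {mpoly R[N * 3]} :=
  match (insub k : option 'I_N) with
  | Some i => 'X_(yidx i a)
  | None => 0
  end.

Definition eps (a b c : 'I_3) : R :=
  match val a, val b, val c with
  | 0, 1, 2 | 1, 2, 0 | 2, 0, 1 => 1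
  | 0, 2, 1 | 2, 1, 0 | 1, 0, 2 => -1
  | _, _, _ => 0
  end.

Definition coord_bracket (i : 'I_N) (a : 'I_3) (j : 'I_N) (b : 'I_3)
  : {mpoly R[N * 3]} :=
  if (i + j < N)%N then \sum_(c < 3) eps a b c *: yv (i + j) c else 0.

(* the unique biderivation (bilinear, Leibniz in each argument) extending
   coord_bracket to all polynomial functions *)
Definition pb (f g : {mpoly R[N * 3]}) : {mpoly R[N * 3]} :=
  \sum_(i < N) \sum_(a < 3) \sum_(j < N) \sum_(b < 3)
    mderiv (yidx i a) f * mderiv (yidx j b) g * coord_bracket i a j b.

Definition ydot (i j : nat) : {mpoly R[N * 3]} := \sum_(a < 3) yv i a * yv j a.

Definition Hk (b : 'I_3 -> R) (k : nat) : {mpoly R[N * 3]} :=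
  2%:R * (\sum_(a < 3) b a *: yv k.-1 a)
  + \sum_(0 <= i < k.-1) ydot i (k - i - 2).

Definition Ck (k : nat) : {mpoly R[N * 3]} :=
  \sum_(k.-1 <= i < N) ydot i (N + k - i - 2).

Definition toC (r : R) : R[i] := real_complex R r.

Definition sigma_entry (a : 'I_3) (r c : 'I_2) : R[i] :=
  match val a, val r, val c with
  | 0, 0, 1 | 0, 1, 0 => 'i
  | 1, 0, 1 => 1
  | 1, 1, 0 => -1
  | 2, 0, 0 => 'i
  | 2, 1, 1 => - 'i
  | _, _, _ => 0
  end.

Definition sigma (a : 'I_3) : 'M[R[i]]_2 :=
  \matrix_(r < 2, c < 2) (2%:R^-1 * sigma_entry a r c).

(* Lax matrix L(lambda) evaluated at the point x of the phase space,
   y_i^a = x (yidx i a) *)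
Definition Lax (b : 'I_3 -> R) (x : 'I_(N * 3) -> R) (lam : R[i]) : 'M[R[i]]_2 :=
  \sum_(a < 3)
    (toC (b a) + \sum_(i < N) toC (x (yidx i a)) * lam ^- i.+1) *: sigma a.

End LiePoisson.

Arguments yidx N i a.
Arguments yv {R} N k a.
Arguments pb {R} N f g.
Arguments Hk {R} N b k.
Arguments Ck R N k.
Arguments Lax {R} N b x lam.

From HB Require Import structures.
From mathcomp Require Import all_boot all_order all_algebra.
From mathcomp Require Import mpoly.
From mathcomp Require Import complex.
From mathcomp Require Import zify ring lra.
Import Order.TTheory GRing.Theory Num.Theory.
Local Open Scope ring_scope.

(* Put z_0 = b and z_(p+1) = y_p.  Since 4 det (sum_a l_a sigma^a - mu) = 4 mu^2 + sum_a l_a^2,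
   4 det (L(lambda) - mu) = 4 mu^2 + <z(t), z(t)> with z(t) = sum_p z_p t^p and t = 1/lambda;
   the coefficient [zconv m] of t^m is <b, b>, H_m or C_(m-N) according as m = 0, m <= N
   or m > N.  As d(zconv m)/dy_i = 2 z_(m-i-1), the bracket {zconv m, zconv n} is
   4 sum_(u < m, v < n) det (z_u, z_v, z_w) with w = m + n - 1 - u - v.  It vanishes because
   the determinant is alternating while the indicator of {u < m, v < n} on the plane
   u + v + w = m + n - 1 has zero antisymmetrization.  Likewise, for m > N,
   {zconv m, y_j} is an antidiagonal sum sum_(p + q = m + j) z_p x z_q of cross products,
   which vanishes by antisymmetry. *)

Lemma corner_count_sym (m n u v w : nat) : (u + v + w = (m + n).-1)%N ->
  (((u < m) && (v < n)) + ((w < m) && (u < n)) + ((v < m) && (w < n)) =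
   ((v < m) && (u < n)) + ((u < m) && (w < n)) + ((w < m) && (v < n)))%N.
Proof.
move=> e.
case: (ltnP u m) => ?; case: (ltnP v m) => ?; case: (ltnP w m) => ?;
case: (ltnP u n) => ?; case: (ltnP v n) => ?; case: (ltnP w n) => ? /=; lia.
Qed.

Lemma sum_nat_cond_lt (V : nmodType) (N m : nat) (G : nat -> V) :
  (forall i, (N <= i < m)%N -> G i = 0) ->
  \sum_(0 <= i < N | (i < m)%N) G i = \sum_(0 <= i < m) G i.
Proof.
move=> G0; rewrite (big_nat_widen _ _ _ _ _ (leq_maxl N m)).
rewrite [RHS](big_nat_widen _ _ _ _ _ (leq_maxr N m)) big_mkcond [RHS]big_mkcond.
apply: eq_bigr => i _; case: (ltnP i m) => [lt_im|]; rewrite ?andbF //=.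
by case: (ltnP i N) => // le_Ni; rewrite G0 // le_Ni.
Qed.

Section SkewSums.
Context {F : numFieldType} {V : lmodType F}.

Lemma lmod_mulrn_eq0 (v : V) n : v *+ n.+1 = 0 -> v = 0.
Proof. by move/eqP; rewrite -scaler_nat scaler_eq0 pnatr_eq0 => /orP[//|/eqP]. Qed.

Lemma sum_antidiagonal_eq0 (B : nat -> nat -> V) s :
  (forall p q, B q p = - B p q) -> \sum_(0 <= p < s.+1) B p (s - p)%N = 0.
Proof.
set X := \sum_(0 <= p < s.+1) _; move=> Bskew; apply: (@lmod_mulrn_eq0 _ 1).
suff XN : X = - X by rewrite mulr2n {2}XN addrN.
rewrite {1}/X big_nat_rev -sumrN; apply: eq_big_nat => p /andP[_ lt_ps].
by rewrite -Bskew; congr (B _ _); lia.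
Qed.

Context {T : nat -> nat -> nat -> V}.
Hypotheses (T_swap12 : forall u v w, T v u w = - T u v w)
           (T_swap23 : forall u v w, T u w v = - T u v w).

Let wsum K (chi : nat -> nat -> nat -> F) :=
  \sum_(0 <= u < K) \sum_(0 <= v < K) \sum_(0 <= w < K) chi u v w *: T u v w.

Let wsum_swap12 K chi : wsum K (fun u v w => chi v u w) = - wsum K chi.
Proof.
rewrite /wsum exchange_big -sumrN; apply: eq_bigr => u _.
rewrite -sumrN; apply: eq_bigr => v _; rewrite -sumrN; apply: eq_bigr => w _.
by rewrite T_swap12 scalerN.
Qed.

Let wsum_swap23 K chi : wsum K (fun u v w => chi u w v) = - wsum K chi.
Proof.
rewrite /wsum -sumrN; apply: eq_bigr => u _.
rewrite exchange_big -sumrN; apply: eq_bigr => v _; rewrite -sumrN; apply: eq_bigr => w _.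
by rewrite T_swap23 scalerN.
Qed.

Let wsumB K f g : wsum K (fun u v w => f u v w - g u v w) = wsum K f - wsum K g.
Proof.
rewrite /wsum -sumrB; apply: eq_bigr => u _; rewrite -sumrB; apply: eq_bigr => v _.
by rewrite -sumrB; apply: eq_bigr => w _; rewrite scalerBl.
Qed.

Let wsumD K f g : wsum K (fun u v w => f u v w + g u v w) = wsum K f + wsum K g.
Proof.
rewrite /wsum -big_split; apply: eq_bigr => u _; rewrite -big_split; apply: eq_bigr => v _.
by rewrite -big_split; apply: eq_bigr => w _; rewrite scalerDl.
Qed.

Let skew3 (chi : nat -> nat -> nat -> F) u v w :=
  chi u v w - chi v u w - chi u w v + chi w u v + chi v w u - chi w v u.

Let wsum_skew3 K chi : (forall u v w, skew3 chi u v w = 0) -> wsum K chi = 0.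
Proof.
move=> chi_skew; apply: (@lmod_mulrn_eq0 _ 5).
have <- : wsum K (skew3 chi) = wsum K chi *+ 6.
  have e2 := wsum_swap12 K chi; have e3 := wsum_swap23 K chi.
  have e4 := wsum_swap23 K (fun u v w => chi v u w).
  have e5 := wsum_swap12 K (fun u v w => chi u w v).
  have e6 := wsum_swap12 K (fun u v w => chi w u v).
  rewrite /skew3 wsumB wsumD wsumD wsumB wsumB e6 e5 e4 e3 e2 !opprK.
  by rewrite !mulrS mulr0n addr0 !addrA.
by rewrite /wsum; do 3!(apply: big1 => ? _); rewrite chi_skew scale0r.
Qed.

Let corner m n u v w : F := ((u < m) && (v < n) && (u + v + w == (m + n).-1))%N%:R.

Let skew3_corner m n u v w : skew3 (corner m n) u v w = 0.
Proof.
rewrite /skew3 /corner.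
have -> : (v + u + w = u + v + w)%N by lia.
have -> : (u + w + v = u + v + w)%N by lia.
have -> : (w + u + v = u + v + w)%N by lia.
have -> : (v + w + u = u + v + w)%N by lia.
have -> : (w + v + u = u + v + w)%N by lia.
have [/corner_count_sym|_] := eqVneq (u + v + w)%N (m + n).-1; last first.
  by rewrite !andbF /=; ring.
move=> /(congr1 (fun k => k%:R : F)); rewrite !andbT !natrD => /eqP.
by rewrite -subr_eq0 => /eqP <-; ring.
Qed.

Let sum_corner_w m n u v :
  \sum_(0 <= w < m + n) corner m n u v w *: T u v w =
  if ((u < m) && (v < n))%N then T u v ((m + n).-1 - (u + v))%N else 0.
Proof.
rewrite /corner; case: ifP => [/andP[lt_um lt_vn]|_]; last first.
  by apply: big1 => w _; rewrite scale0r.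
rewrite (eq_bigr (fun w => if w == ((m + n).-1 - (u + v))%N then T u v w else 0)).
  by rewrite -big_mkcond big_nat1_eq; case: ifP => //; lia.
move=> w _ /=.
have -> : (u + v + w == (m + n).-1) = (w == (m + n).-1 - (u + v))%N by apply/eqP/eqP; lia.
by case: eqP; rewrite ?scale1r ?scale0r.
Qed.

Lemma sum_corner_eq0 m n :
  \sum_(0 <= u < m) \sum_(0 <= v < n) T u v ((m + n).-1 - (u + v))%N = 0.
Proof.
transitivity (wsum (m + n) (corner m n)); last exact: wsum_skew3 (@skew3_corner m n).
rewrite (big_nat_widen _ _ _ _ _ (leq_addr n m)) big_mkcond; apply: eq_bigr => u _.
under [RHS]eq_bigr => v _ do rewrite sum_corner_w.
case: (ltnP u m) => [lt_um|le_mu] /=; last by rewrite big1.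
by rewrite (big_nat_widen _ _ _ _ _ (leq_addl m n)) big_mkcond.
Qed.

End SkewSums.

Lemma det_mx22 (F : comNzRingType) (A : 'M[F]_2) :
  \det A = A 0 0 * A 1 1 - A 0 1 * A 1 0.
Proof.
rewrite (expand_det_row _ 0) !big_ord_recl big_ord0 /cofactor !det_mx11 !mxE /=.
rewrite addr0 expr0 expr1 !mul1r mulN1r mulrN.
by congr (A _ _ * A _ _ - A _ _ * A _ _); apply/val_inj.
Qed.

Lemma det_pauli (R : rcfType) (l : 'I_3 -> R[i]) (mu : R[i]) :
  4%:R * \det (\sum_(a < 3) l a *: sigma R a - mu%:M)
  = 4%:R * mu ^+ 2 + \sum_(a < 3) l a ^+ 2.
Proof.
rewrite det_mx22 !mxE !summxE !big_ord_recl !big_ord0 !mxE /sigma_entry /=.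
have ii : ('i : R[i]) * 'i = -1 by exact: mulCii.
have halfK : 2%:R * (2%:R : R[i])^-1 = 1 by rewrite mulfV // pnatr_eq0.
set h := (2%:R : R[i])^-1; set l0 := l _; set l1 := l _; set l2 := l _.
transitivity (4%:R * mu ^+ 2 - ('i * 'i) * (2%:R * h) ^+ 2 * (l0 ^+ 2 + l2 ^+ 2)
   + (2%:R * h) ^+ 2 * l1 ^+ 2); first by ring.
by rewrite ii halfK; ring.
Qed.

Lemma mderivXU (R : comNzRingType) n (i j : 'I_n) :
  'X_i^`M(j) = (i == j)%:R :> {mpoly R[n]}.
Proof.
rewrite mderivX mnm1E; case: eqP => [->|_]; last by rewrite scale0r.
by rewrite -{1}[U_(j)%MM]add0m addmK mpolyX0 scale1r.
Qed.

Lemma sum_if_eq (V : nmodType) (I : finType) (i : I) (c : bool) (F : I -> V) :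
  \sum_j (if c && (j == i) then F j else 0) = if c then F i else 0.
Proof. by case: c => /=; [rewrite -big_mkcond big_pred1_eq | rewrite big1]. Qed.

Lemma eps_swap12 (R : rcfType) a c d : eps R c a d = - eps R a c d.
Proof. by move: a c d; do 3!case=> [[|[|[|?]]] ?] //=; rewrite /eps /= ?opprK ?oppr0. Qed.

Lemma eps_swap23 (R : rcfType) a c d : eps R a d c = - eps R a c d.
Proof. by move: a c d; do 3!case=> [[|[|[|?]]] ?] //=; rewrite /eps /= ?opprK ?oppr0. Qed.

Lemma eps_cycle (R : rcfType) a c d : eps R c d a = eps R a c d.
Proof. by move: a c d; do 3!case=> [[|[|[|?]]] ?] //=; rewrite /eps /= ?opprK ?oppr0. Qed.

Section LiePoisson.
Variables (R : rcfType) (N : nat) (b : 'I_3 -> R).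
Local Notation P := {mpoly R[N * 3]}.

Definition zv p a : P := if p is p'.+1 then yv N p' a else (b a)%:MP.

Definition zconv m : P := \sum_(0 <= p < m.+1) \sum_(a < 3) zv p a * zv (m - p) a.

Definition ztriple u v w : P :=
  \sum_(a < 3) \sum_(c < 3) \sum_(d < 3) eps R a c d *: (zv u a * zv v c * zv w d).

Definition zcross be p q : P :=
  \sum_(a < 3) \sum_(d < 3) eps R be a d *: (zv p a * zv q d).

Lemma yv_eq0 k a : (N <= k)%N -> yv N k a = 0 :> P.
Proof. by move=> le_Nk; rewrite /yv insubN // -leqNgt. Qed.

Lemma zv_eq0 p a : (N < p)%N -> zv p a = 0.
Proof. by case: p => // p lt_Np; rewrite /= yv_eq0. Qed.

Lemma yidx_eq (i j : 'I_N) (a c : 'I_3) :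
  (yidx i a == yidx j c) = (i == j) && (a == c).
Proof.
apply/eqP/andP => [|[/eqP -> /eqP ->]] //.
by rewrite /yidx /mxvec_index => /cast_ord_inj /enum_rank_inj [-> ->].
Qed.

Lemma yvE (i : 'I_N) a : yv N i a = 'X_(yidx i a) :> P.
Proof. by rewrite /yv valK. Qed.

Lemma mderiv_yv (i : 'I_N) a k c :
  (yv N k c)^`M(yidx i a) = ((k == i) && (c == a))%:R :> P.
Proof.
rewrite /yv; case: insubP => [k' _ <-|]; first by rewrite mderivXU yidx_eq.
by rewrite mderiv0 -leqNgt; case: eqP => // -> /(leq_trans (ltn_ord i)); rewrite ltnn.
Qed.

Lemma mderiv_zv (i : 'I_N) a p c :
  (zv p c)^`M(yidx i a) = ((p == i.+1) && (c == a))%:R.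
Proof. by case: p => [|p] /=; [rewrite mderivC | rewrite mderiv_yv eqSS]. Qed.

Lemma mderiv_zconv (i : 'I_N) a m :
  (zconv m)^`M(yidx i a) = if (i < m)%N then 2%:R * zv (m - i.+1) a else 0.
Proof.
have sym : \sum_(0 <= p < m.+1) \sum_(c < 3) zv p c * (zv (m - p) c)^`M(yidx i a)
         = \sum_(0 <= p < m.+1) \sum_(c < 3) (zv p c)^`M(yidx i a) * zv (m - p) c.
  rewrite big_nat_rev; apply: eq_big_nat => p /andP[_ lt_pm]; apply: eq_bigr => c _.
  by rewrite add0n subSS subKn // mulrC.
rewrite /zconv raddf_sum /=.
under eq_bigr => p _ do rewrite raddf_sum /= (eq_bigr _ (fun c _ => mderivM _ _ _)) big_split.
rewrite big_split /= sym -mulr2n.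
under eq_bigr => p _ do under eq_bigr => c _ do rewrite mderiv_zv mulr_natl mulrb.
under eq_bigr => p _ do rewrite sum_if_eq.
by rewrite -big_mkcond big_nat1_eq ltnS leq0n; case: ltnP; rewrite ?mul0rn // mulr_natl.
Qed.

Lemma coord_bracketE (i j : 'I_N) a c :
  coord_bracket R i a j c = \sum_(d < 3) eps R a c d *: zv (i + j).+1 d.
Proof.
rewrite /coord_bracket; case: ltnP => // le_Nij.
by rewrite big1 // => d _; rewrite zv_eq0 ?scaler0 ?ltnS.
Qed.

Lemma ztriple_swap12 u v w : ztriple v u w = - ztriple u v w.
Proof.
rewrite /ztriple exchange_big -sumrN; apply: eq_bigr => a _.
rewrite -sumrN; apply: eq_bigr => c _; rewrite -sumrN; apply: eq_bigr => d _.
by rewrite eps_swap12 scaleNr (mulrC (zv v c)).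
Qed.

Lemma ztriple_swap23 u v w : ztriple u w v = - ztriple u v w.
Proof.
rewrite /ztriple -sumrN; apply: eq_bigr => a _.
rewrite exchange_big -sumrN; apply: eq_bigr => c _; rewrite -sumrN; apply: eq_bigr => d _.
by rewrite eps_swap23 scaleNr -!mulrA (mulrC (zv w d)).
Qed.

Lemma ztriple_eq0 u v w : (N < w)%N -> ztriple u v w = 0.
Proof.
move=> lt_Nw; do 3!(apply: big1 => ? _).
by rewrite (zv_eq0 _ _ lt_Nw) mulr0 scaler0.
Qed.

Lemma pb_zconvE m n : pb N (zconv m) (zconv n) =
  4%:R * \sum_(0 <= i < N | (i < m)%N) \sum_(0 <= j < N | (j < n)%N)
            ztriple (m - i.+1) (n - j.+1) (i + j).+1.
Proof.
rewrite /pb mulr_sumr big_mkord [RHS]big_mkcond; apply: eq_bigr => i _; rewrite exchange_big /=.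
under eq_bigr => j _ do under eq_bigr => a _ do under eq_bigr => c _ do
  rewrite !mderiv_zconv coord_bracketE.
case: (ltnP i m) => [lt_im|_]; last first.
  by do 3!(apply: big1 => ? _); rewrite !mul0r.
rewrite mulr_sumr big_mkord [RHS]big_mkcond; apply: eq_bigr => j _.
case: (ltnP j n) => [lt_jn|_]; last first.
  by do 2!(apply: big1 => ? _); rewrite mulr0 mul0r.
rewrite /ztriple mulr_sumr; apply: eq_bigr => a _; rewrite mulr_sumr; apply: eq_bigr => c _.
rewrite mulr_sumr mulr_sumr; apply: eq_bigr => d _.
by rewrite -!scalerAr; congr (_ *: _); ring.
Qed.

Lemma pb_zconv_corner m n : pb N (zconv m) (zconv n) =
  4%:R * \sum_(0 <= u < m) \sum_(0 <= v < n) ztriple u v ((m + n).-1 - (u + v)).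
Proof.
rewrite pb_zconvE sum_nat_cond_lt => [|i /andP[le_Ni _]]; last first.
  by rewrite big1 // => j _; rewrite ztriple_eq0 //; lia.
rewrite (eq_bigr (fun i => \sum_(0 <= j < n) ztriple (m - i.+1) (n - j.+1) (i + j).+1)).
  rewrite big_nat_rev; congr (_ * _); apply: eq_big_nat => u /andP[_ lt_um].
  rewrite big_nat_rev; apply: eq_big_nat => v /andP[_ lt_vn].
  by congr ztriple; lia.
move=> i _; rewrite sum_nat_cond_lt // => j /andP[le_Nj _].
by rewrite ztriple_eq0 //; lia.
Qed.

Lemma pb_zconv_eq0 m n : pb N (zconv m) (zconv n) = 0.
Proof. by rewrite pb_zconv_corner (sum_corner_eq0 ztriple_swap12 ztriple_swap23) mulr0. Qed.

Lemma zcross_swap be p q : zcross be q p = - zcross be p q.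
Proof.
rewrite /zcross exchange_big -sumrN; apply: eq_bigr => a _.
by rewrite -sumrN; apply: eq_bigr => d _; rewrite eps_swap23 scaleNr mulrC.
Qed.

Lemma zcross_eq0 be p q : (N < p)%N || (N < q)%N -> zcross be p q = 0.
Proof.
case/orP => lt_N; do 2!(apply: big1 => ? _).
  by rewrite (zv_eq0 _ _ lt_N) mul0r scaler0.
by rewrite (zv_eq0 _ _ lt_N) mulr0 scaler0.
Qed.

Lemma pb_yv f (j : 'I_N) be :
  pb N f (yv N j be) = \sum_(i < N) \sum_(a < 3) f^`M(yidx i a) * coord_bracket R i a j be.
Proof.
apply: eq_bigr => i _; apply: eq_bigr => a _.
rewrite (bigD1 j) //= (bigD1 be) //= yvE mderivXU eqxx mulr1 !big1 ?addr0 //.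
  move=> j' ne_j'j; apply: big1 => c _.
  by rewrite mderivXU yidx_eq eq_sym (negbTE ne_j'j) mulr0 mul0r.
by move=> c ne_cbe; rewrite mderivXU yidx_eq eqxx eq_sym (negbTE ne_cbe) mulr0 mul0r.
Qed.

Lemma pb_zconv_yv m (j : 'I_N) be : (N <= m)%N ->
  pb N (zconv m) (yv N j be) = 2%:R * \sum_(i < N) zcross be (i + j).+1 (m - i.+1).
Proof.
move=> le_Nm; rewrite pb_yv mulr_sumr; apply: eq_bigr => i _.
have lt_im : (i < m)%N := leq_trans (ltn_ord i) le_Nm.
under eq_bigr => a _ do rewrite mderiv_zconv lt_im coord_bracketE.
rewrite /zcross exchange_big mulr_sumr; apply: eq_bigr => a _.
rewrite !mulr_sumr; apply: eq_bigr => d _.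
by rewrite (eps_cycle _ a) -!scalerAr; congr (_ *: _); ring.
Qed.

Lemma pb_zconv_yv_eq0 m (j : 'I_N) be : (N < m)%N -> pb N (zconv m) (yv N j be) = 0.
Proof.
move=> lt_Nm; rewrite pb_zconv_yv; last exact: ltnW.
suff -> : \sum_(i < N) zcross be (i + j).+1 (m - i.+1) =
          \sum_(0 <= q < (m + j).+1) zcross be q (m + j - q).
  by rewrite sum_antidiagonal_eq0 ?mulr0 // => p q; apply: zcross_swap.
rewrite (@big_cat_nat _ _ _ j.+1) //=; last by lia.
rewrite [X in _ + X](@big_cat_nat _ _ _ (j + N).+1) /=; [|lia|lia].
rewrite [X in X + _]big1_seq ?add0r => [|q]; last first.
  by rewrite /= mem_index_iota => /andP[_ lt_qj]; apply: zcross_eq0; apply/orP; right; lia.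
rewrite [X in _ + X]big1_seq ?addr0 => [|q]; last first.
  by rewrite /= mem_index_iota => /andP[lt_Nq _]; apply: zcross_eq0; apply/orP; left; lia.
rewrite -{1}[j.+1]add0n big_addn subSS addKn big_mkord; apply: eq_bigr => i _.
by congr zcross; lia.
Qed.

Lemma Hk_zconv k : (0 < k)%N -> Hk N b k = zconv k.
Proof.
case: k => // k _; rewrite /Hk /zconv big_nat_recl // big_nat_recr //= subnn.
rewrite mulr2n mulrDl mul1r -!addrA; congr (_ + _).
  by apply: eq_bigr => a _; rewrite mul_mpolyC.
rewrite addrC; congr (_ + _); last by apply: eq_bigr => a _; rewrite mulrC mul_mpolyC.
apply: eq_big_nat => i /andP[_ lt_ik]; apply: eq_bigr => a _.
by rewrite subSS -(subnSK lt_ik); congr (_ * yv _ _ _); lia.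
Qed.

Lemma Ck_zconv k : (0 < k <= N)%N -> Ck R N k = zconv (N + k).
Proof.
case: k => // k /= le_kN; rewrite /zconv (@big_cat_nat _ _ _ k.+1) //=; last by lia.
rewrite [X in _ + X](@big_cat_nat _ _ _ N.+1) /=; [|lia|lia].
rewrite [X in X + _]big1_seq ?add0r => [|p]; last first.
  rewrite /= mem_index_iota => /andP[_ lt_pk]; apply: big1 => a _.
  by rewrite [zv (_ - p) _]zv_eq0 ?mulr0 //; lia.
rewrite [X in _ + X]big1_seq ?addr0 => [|p]; last first.
  by rewrite /= mem_index_iota => /andP[lt_Np _]; apply: big1 => a _; rewrite [zv p _]zv_eq0 ?mul0r.
rewrite big_add1 /=; apply: eq_big_nat => i /andP[_ lt_iN]; apply: eq_bigr => a _.
have lt_iNk : (i.+1 < N + k.+1)%N by lia.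
by rewrite -(subnSK lt_iNk) /=; congr (_ * yv _ _ _); lia.
Qed.

Definition zpoly (x : 'I_(N * 3) -> R) a : {poly R[i]} :=
  \poly_(p < N.+1) toC (zv p a).@[x].

Lemma coef_zpoly x a p : (zpoly x a)`_p = toC (zv p a).@[x].
Proof.
by rewrite coef_poly; case: ltnP => // lt_Np; rewrite zv_eq0 // meval0.
Qed.

Lemma horner_zpoly x lam a :
  toC (b a) + \sum_(i < N) toC (x (yidx i a)) * lam ^- i.+1 = (zpoly x a).[lam^-1].
Proof.
rewrite horner_poly big_ord_recl /= expr0 mulr1 mevalC; congr (_ + _).
by apply: eq_bigr => i _; rewrite yvE mevalXU exprVn.
Qed.

Lemma meval_zconv x m : (zconv m).@[x] =
  \sum_(0 <= p < m.+1) \sum_(a < 3) (zv p a).@[x] * (zv (m - p) a).@[x].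
Proof.
by rewrite rmorph_sum; apply: eq_bigr => p _; rewrite rmorph_sum; apply: eq_bigr => a _; rewrite rmorphM.
Qed.

Lemma sum_zpoly_sqr x t : \sum_(a < 3) (zpoly x a).[t] ^+ 2 =
  \sum_(0 <= m < (N + N).+1) toC (zconv m).@[x] * t ^+ m.
Proof.
have size_sqr a : (size (zpoly x a * zpoly x a)%R <= (N + N).+1)%N.
  have : (size (zpoly x a) <= N.+1)%N := size_poly _ _.
  by move=> ?; apply: (leq_trans (size_mul_leq _ _)); lia.
under eq_bigr => a _ do rewrite expr2 -hornerM (horner_coef_wide _ (size_sqr a)).
rewrite exchange_big big_mkord; apply: eq_bigr => m _; rewrite -mulr_suml; congr (_ * _).
rewrite meval_zconv /toC rmorph_sum big_mkord; under [RHS]eq_bigr do rewrite rmorph_sum.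
rewrite [RHS]exchange_big; apply: eq_bigr => a _; rewrite coefM; apply: eq_bigr => p _.
by rewrite !coef_zpoly /toC rmorphM.
Qed.

Lemma det_Lax x lam mu :
  4%:R * \det (Lax N b x lam - mu%:M)
  = 4%:R * mu ^+ 2 + toC (\sum_(a < 3) b a * b a)
    + \sum_(1 <= k < N.+1) toC (Hk N b k).@[x] * lam ^- k
    + \sum_(1 <= k < N.+1) toC (Ck R N k).@[x] * lam ^- (N + k).
Proof.
rewrite /Lax det_pauli; under eq_bigr => a _ do rewrite horner_zpoly.
have shiftN (G : nat -> R[i]) : \sum_(N <= m < N + N) G m = \sum_(0 <= k < N) G (k + N)%N.
  by rewrite -{1}[N]add0n big_addn addnK.
rewrite sum_zpoly_sqr big_nat_recl // (@big_cat_nat _ _ _ N) //=; last by lia.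
rewrite shiftN !big_add1 /= !addrA expr0 mulr1.
congr (_ + _ + _ + _).
- by rewrite meval_zconv big_nat1; congr toC; apply: eq_bigr => a _; rewrite /= mevalC.
- by apply: eq_big_nat => k /andP[_ lt_kN]; rewrite Hk_zconv // exprVn.
- apply: eq_big_nat => k /andP[_ lt_kN]; rewrite Ck_zconv ?exprVn; last by lia.
  by congr (toC (zconv _).@[x] * _ ^- _); lia.
Qed.

End LiePoisson.

Theorem proposition2 (R : rcfType) (N : nat) (hN : (1 <= N)%N) (b : 'I_3 -> R) :
  (forall (x : 'I_(N * 3) -> R) (lam mu : R[i]), lam != 0 ->
     4%:R * \det (Lax N b x lam - mu%:M)
     = 4%:R * mu ^+ 2 + toC (\sum_(a < 3) b a * b a)
       + \sum_(1 <= k < N.+1) toC (Hk N b k).@[x] * lam ^- k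
       + \sum_(1 <= k < N.+1) toC (Ck R N k).@[x] * lam ^- (N + k))
  /\ (forall i k : nat, (1 <= i <= N)%N -> (1 <= k <= N)%N ->
        pb N (Hk N b i) (Hk N b k) = 0 /\ pb N (Ck R N i) (Hk N b k) = 0
        /\ pb N (Ck R N i) (Ck R N k) = 0)
  /\ (forall (k : nat) (j : 'I_N) (be : 'I_3), (1 <= k <= N)%N ->
        pb N (Ck R N k) (yv N j be) = 0).
Proof.
split=> [x lam mu _|]; first exact: det_Lax.
split=> [i k iN kN | k j be kN].
  have [i_gt0 k_gt0] : (0 < i)%N /\ (0 < k)%N by case/andP: iN; case/andP: kN.
  by rewrite !Hk_zconv // !(@Ck_zconv _ _ b) // !pb_zconv_eq0.
rewrite (@Ck_zconv _ _ b) // pb_zconv_yv_eq0 //.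
by case/andP: kN => k_gt0 _; rewrite -addn1 leq_add2l.
Qed.
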